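(* Let $\mathbb{F}\in\{\mathbb{R},\mathbb{C}\}$ and $1\le k\leq N<M$. Suppose $\Phi\in\mathcal{P}(M,N)$ and $\Psi\in\mathcal{P}(M,M-N)$ are Naimark complements. Then $\Phi$ maximizes $V_k$ over $\mathcal{P}(M,N)$ if and only if $\Psi$ maximizes $CV_{M-k}$ over $\mathcal{P}(M,M-N)$.
   Context: $\mathcal{P}(M,n)$ is the set of Parseval frames for $\mathbb{F}^n$ with $M$ vectors, i.e. families $\{\varphi_i\}_{i=1}^M\subseteq\mathbb{F}^n$ whose $n\times M$ matrix $\Phi$ satisfies $\Phi\Phi^*=I$. $\Phi\in\mathcal{P}(M,N)$ and $\Psi\in\mathcal{P}(M,M-N)$ are Naimark complements if $\Psi^*\Psi=I-\Phi^*\Phi$. For $K\subseteq[M]$, $\Phi_K$ is the submatrix of columns indexed by $K$. For an $n\times m$ matrix $F$: if $m\le n$, $v_m(F)=\sqrt{\det(F^*F)}$; if $m\ge n$, $cv_m(F)=\sqrt{\det(FF^* )}$. Then $V_k(\Phi)=\sum_{|K|=k}v_k(\Phi_K)$ for $k\le n$, and $CV_k(\Phi)=\sum_{|K|=k}cv_k(\Phi_K)$ for $k\ge n$. *)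

From HB Require Import structures.
From mathcomp Require Import all_boot all_order all_algebra.
From mathcomp Require Import reals.
From mathcomp Require Import complex.
Set Implicit Arguments. Unset Strict Implicit. Unset Printing Implicit Defensive.
Import Order.TTheory GRing.Theory Num.Theory.
Local Open Scope ring_scope.

(* Generic setting: a scalar field F with a conjugation [conj] (identity for
   F = R, complex conjugation for F = C) and a square root [sq] used to define
   volumes (applied only to nonnegative real scalars). *)
Section Frames.
Variables (F : numFieldType) (conj : F -> F) (sq : F -> F).

Definition adj (m n : nat) (A : 'M[F]_(m, n)) : 'M[F]_(n, m) := map_mx conj A^T.

Definition parseval (n M : nat) (Phi : 'M[F]_(n, M)) : Prop :=
  Phi *m adj Phi = 1%:M.

Definition naimark_compl (N M : nat) (Phi : 'M[F]_(N, M)) (Psi : 'M[F]_(M - N, M))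
  : Prop := adj Psi *m Psi = 1%:M - adj Phi *m Phi.

Definition subcols (n M : nat) (Phi : 'M[F]_(n, M)) (K : {set 'I_M})
  : 'M[F]_(n, #|K|) := colsub (fun i : 'I_#|K| => enum_val i) Phi.

Definition vol (n m : nat) (G : 'M[F]_(n, m)) : F := sq (\det (adj G *m G)).
Definition covol (n m : nat) (G : 'M[F]_(n, m)) : F := sq (\det (G *m adj G)).

(* V_k(Phi) (used for k <= n) and CV_k(Phi) (used for k >= n) *)
Definition Vk (n M k : nat) (Phi : 'M[F]_(n, M)) : F :=
  \sum_(K : {set 'I_M} | #|K| == k) vol (subcols Phi K).
Definition CVk (n M k : nat) (Phi : 'M[F]_(n, M)) : F :=
  \sum_(K : {set 'I_M} | #|K| == k) covol (subcols Phi K).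

Definition maximizes (n M : nat) (f : 'M[F]_(n, M) -> F) (Phi : 'M[F]_(n, M))
  : Prop := parseval Phi /\ forall Phi' : 'M[F]_(n, M), parseval Phi' -> f Phi' <= f Phi.

Definition prop14_for : Prop :=
  forall (k N M : nat), (1 <= k)%N -> (k <= N)%N -> (N < M)%N ->
  forall (Phi : 'M[F]_(N, M)) (Psi : 'M[F]_(M - N, M)),
    parseval Phi -> parseval Psi -> naimark_compl Phi Psi ->
    (maximizes (Vk k) Phi <-> maximizes (CVk (M - k)) Psi).
End Frames.

(* For K and its complement K^c, the Naimark relation gives
   Phi_K^* Phi_K = I - Psi_K^* Psi_K, and Parseval-ness of Psi gives
   Psi_{K^c} Psi_{K^c}^* = I - Psi_K Psi_K^*.  Sylvester's identity
   det (I - A B) = det (I - B A) then yields v_k(Phi_K) = cv_{M-k}(Psi_{K^c}),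
   and summing over |K| = k gives V_k(Phi) = CV_{M-k}(Psi).  Since every
   Parseval frame has a Naimark complement (complete its rows to an
   orthonormal basis), V_k on P(M,N) and CV_{M-k} on P(M,M-N) take exactly the
   same values at corresponding frames, so their maximizers correspond. *)
From Pilot Require Import Defs.
From HB Require Import structures.
From mathcomp Require Import all_boot all_order all_algebra.
From mathcomp Require Import reals.
From mathcomp Require Import complex.
From mathcomp Require Import zify.
Set Implicit Arguments. Unset Strict Implicit. Unset Printing Implicit Defensive.
Import Order.TTheory GRing.Theory Num.Theory.
Local Open Scope ring_scope.

Lemma det1B_mulmxC (R : comPzRingType) m n (A : 'M[R]_(m, n)) (B : 'M[R]_(n, m)) :
  \det (1%:M - A *m B) = \det (1%:M - B *m A).
Proof.
have lower : block_mx 1%:M (- A) 0 1%:M *m block_mx 1%:M A B 1%:M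
             = block_mx (1%:M - A *m B) 0 B 1%:M.
  by rewrite mulmx_block !mul1mx !mul0mx mulmx1 !add0r addrN mulNmx.
have upper : block_mx 1%:M 0 (- B) 1%:M *m block_mx 1%:M A B 1%:M
             = block_mx 1%:M A 0 (1%:M - B *m A).
  by rewrite mulmx_block !mul1mx !mul0mx mulmx1 !addr0 mulNmx addNr addrC.
have := congr1 determinant lower; have := congr1 determinant upper.
rewrite !det_mulmx !det_ublock !det_lblock !det1 !mul1r !mulr1.
by move=> -> ->.
Qed.

Section Frames.
Variables (F : numFieldType) (conj : F -> F) (sq : F -> F).
Hypothesis conjD : {morph conj : x y / x + y}.
Hypothesis conjM : {morph conj : x y / x * y}.
Hypothesis conjK : involutive conj.
Hypothesis mul_conj_ge0 : forall x, 0 <= x * conj x.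
Hypothesis mul_conj_eq0 : forall x, x * conj x = 0 -> x = 0.
Hypothesis mul_conj_onto_pos : forall r, 0 < r -> exists c, c * conj c = r.

Local Notation adj := (@adj F conj).
Local Notation parseval := (@parseval F conj).
Local Notation naimark_compl := (@naimark_compl F conj).

Lemma conj0 : conj 0 = 0.
Proof. by apply: (addrI (conj 0)); rewrite -conjD !addr0. Qed.

Lemma conj_sum (I : finType) (P : pred I) (f : I -> F) :
  conj (\sum_(i | P i) f i) = \sum_(i | P i) conj (f i).
Proof. exact: (big_morph conj conjD conj0). Qed.

Lemma adjE m n (A : 'M[F]_(m, n)) i j : adj A i j = conj (A j i).
Proof. by rewrite !mxE. Qed.

Lemma adjK m n (A : 'M[F]_(m, n)) : adj (adj A) = A.
Proof. by apply/matrixP=> i j; rewrite !adjE conjK. Qed.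

Lemma adjM m n p (A : 'M[F]_(m, n)) (B : 'M[F]_(n, p)) :
  adj (A *m B) = adj B *m adj A.
Proof.
apply/matrixP=> i j; rewrite adjE !mxE conj_sum; apply: eq_bigr => k _.
by rewrite conjM !adjE mulrC.
Qed.

Lemma adj0 m n : adj (0 : 'M[F]_(m, n)) = 0.
Proof. by apply/matrixP=> i j; rewrite adjE !mxE conj0. Qed.

Lemma adjZ m n c (A : 'M[F]_(m, n)) : adj (c *: A) = conj c *: adj A.
Proof. by apply/matrixP=> i j; rewrite !mxE conjM. Qed.

Lemma adj_col_mx m1 m2 n (A : 'M[F]_(m1, n)) (B : 'M[F]_(m2, n)) :
  adj (col_mx A B) = row_mx (adj A) (adj B).
Proof. by rewrite /Defs.adj tr_col_mx map_row_mx. Qed.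

Lemma mulmx_adj_eq0 m n p (A : 'M[F]_(m, n)) (B : 'M[F]_(p, n)) :
  A *m adj B = 0 -> B *m adj A = 0.
Proof. by rewrite -[B *m _]adjK adjM adjK => ->; rewrite adj0. Qed.

Lemma gram_subcols_naimark N M (Phi : 'M[F]_(N, M)) (Psi : 'M[F]_(M - N, M)) K :
  naimark_compl Phi Psi ->
  adj (subcols Phi K) *m subcols Phi K
    = 1%:M - adj (subcols Psi K) *m subcols Psi K.
Proof.
move=> compl; apply/matrixP=> a b.
have := congr1 (fun X : 'M[F]_M => X (enum_val a) (enum_val b)) compl.
rewrite !mxE (inj_eq enum_val_inj) => PsiE.
have sum_subcols n (A : 'M[F]_(n, M)) :
    \sum_j adj (subcols A K) a j * subcols A K j b
    = \sum_j adj A (enum_val a) j * A j (enum_val b).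
  by apply: eq_bigr => r _; rewrite !mxE.
by rewrite !sum_subcols PsiE opprB addrC subrK.
Qed.

Lemma cogram_subcols_setC n M (Psi : 'M[F]_(n, M)) (K : {set 'I_M}) :
  parseval Psi ->
  subcols Psi (~: K) *m adj (subcols Psi (~: K))
    = 1%:M - subcols Psi K *m adj (subcols Psi K).
Proof.
move=> PsiP; apply/matrixP=> r s.
have := congr1 (fun X : 'M[F]_n => X r s) PsiP; rewrite !mxE => <-.
have sum_subcols (L : {set 'I_M}) :
    \sum_(j < #|L|) subcols Psi L r j * adj (subcols Psi L) j s
    = \sum_(i in L) Psi r i * adj Psi i s.
  by rewrite [RHS]big_enum_val; apply: eq_bigr => i _; rewrite !mxE.
rewrite !sum_subcols [in RHS](bigID (mem K)) /=.
under [in LHS]eq_bigl do rewrite in_setC.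
by rewrite addrAC subrr add0r.
Qed.

Lemma vol_subcols_naimark N M (Phi : 'M[F]_(N, M)) (Psi : 'M[F]_(M - N, M)) K :
  parseval Psi -> naimark_compl Phi Psi ->
  vol conj sq (subcols Phi K) = covol conj sq (subcols Psi (~: K)).
Proof.
move=> PsiP compl.
by rewrite /vol /covol (gram_subcols_naimark _ compl) cogram_subcols_setC // det1B_mulmxC.
Qed.

Lemma Vk_naimark k N M (Phi : 'M[F]_(N, M)) (Psi : 'M[F]_(M - N, M)) :
  (k <= M)%N -> parseval Psi -> naimark_compl Phi Psi ->
  Vk conj sq k Phi = CVk conj sq (M - k) Psi.
Proof.
move=> kM PsiP compl; rewrite /Vk /CVk (reindex_inj (@setC_inj _)) /=.
apply: eq_big => K.
  have KM : (#|K| <= M)%N by rewrite -[M in (_ <= M)%N]card_ord max_card.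
  by rewrite cardsCs setCK card_ord; apply/eqP/eqP => [<-|->]; rewrite subKn.
by move=> _; rewrite (vol_subcols_naimark _ PsiP compl) setCK.
Qed.

Lemma row_norm_gt0 M (u : 'rV[F]_M) : u != 0 -> 0 < (u *m adj u) 0 0.
Proof.
move=> u_neq0; have normE : (u *m adj u) 0 0 = \sum_j u 0 j * conj (u 0 j).
  by rewrite mxE; apply: eq_bigr => j _; rewrite adjE.
rewrite normE lt0r sumr_ge0 ?andbT //; apply: contraNneq u_neq0.
move=> /(psumr_eq0P (fun j _ => mul_conj_ge0 _)) u0; apply/eqP/rowP => j; rewrite mxE.
by apply: mul_conj_eq0; rewrite u0.
Qed.

Lemma exists_unit_row_normalizing M (u : 'rV[F]_M) :
  u != 0 -> exists c, (c *: u) *m adj (c *: u) = 1%:M.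
Proof.
move=> u_neq0; set s := (u *m adj u) 0 0.
have [c cE] : exists c, c * conj c = s^-1.
  by apply: mul_conj_onto_pos; rewrite invr_gt0 row_norm_gt0.
exists c; rewrite adjZ -scalemxAl -scalemxAr scalerA cE [u *m adj u]mx11_scalar -/s.
by rewrite scale_scalar_mx mulVf // gt_eqF // row_norm_gt0.
Qed.

Lemma exists_unit_row_orthogonal p M (P : 'M[F]_(p, M)) : (p < M)%N ->
  exists w : 'rV[F]_M, w *m adj w = 1%:M /\ w *m adj P = 0.
Proof.
move=> pM; have : kermx (adj P) != 0.
  rewrite -mxrank_eq0 mxrank_ker subn_eq0 -ltnNge.
  exact: leq_ltn_trans (rank_leq_col (adj P)) pM.
case/rowV0Pn => u /sub_kermxP uP u_neq0.
have [c cu_unit] := exists_unit_row_normalizing u_neq0.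
by exists (c *: u); split; rewrite // -scalemxAl uP scaler0.
Qed.

(* Gram-Schmidt completion: adjoin a unit row orthogonal to P and recurse. *)
Lemma parseval_completion q p M (P : 'M[F]_(p, M)) : (p + q)%N = M ->
  parseval P ->
  exists Q : 'M[F]_(q, M), parseval Q /\ adj Q *m Q = 1%:M - adj P *m P.
Proof.
elim: q p M P => [|q IHq] p M P pqM PP.
  rewrite addn0 in pqM; subst M; exists 0; split.
    by rewrite /parseval [LHS]flatmx0 [RHS]flatmx0.
  by rewrite (mulmx1C PP) subrr mulmx0.
have [w [ww wP]] : exists w : 'rV[F]_M, w *m adj w = 1%:M /\ w *m adj P = 0.
  by apply: exists_unit_row_orthogonal; lia.
have Pw := mulmx_adj_eq0 wP.
have PwP : parseval (col_mx P w).
  by rewrite /parseval adj_col_mx mul_col_row PP ww wP Pw -scalar_mx_block.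
have p1qM : (p + 1 + q)%N = M by lia.
have [Q [QQ QPw]] := IHq _ _ _ p1qM PwP.
rewrite adj_col_mx mul_row_col in QPw.
have wQ : w *m adj Q = 0.
  have wQQ : w *m adj Q *m Q = 0.
    rewrite -mulmxA QPw mulmxBr mulmx1 mulmxDr !mulmxA wP mul0mx add0r ww.
    by rewrite mul1mx subrr.
  by rewrite -[w *m adj Q]mulmx1 -QQ mulmxA wQQ mul0mx.
exists (col_mx w Q : 'M_(1 + q, M)); split.
  change (col_mx w Q *m adj (col_mx w Q) = 1%:M :> 'M_(1 + q)).
  by rewrite adj_col_mx mul_col_row ww QQ wQ (mulmx_adj_eq0 wQ) -scalar_mx_block.
change (adj (col_mx w Q) *m col_mx w Q = 1%:M - adj P *m P).
by rewrite adj_col_mx mul_row_col QPw addrC opprD addrA subrK.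
Qed.

Lemma maximizes_transfer n1 n2 M (f : 'M[F]_(n1, M) -> F) (g : 'M[F]_(n2, M) -> F)
    (X : 'M[F]_(n1, M)) (Y : 'M[F]_(n2, M)) :
  parseval X -> parseval Y -> f X = g Y ->
  (forall X', parseval X' -> exists2 Y', parseval Y' & f X' = g Y') ->
  (forall Y', parseval Y' -> exists2 X', parseval X' & g Y' = f X') ->
  maximizes conj f X <-> maximizes conj g Y.
Proof.
move=> XP YP fXgY f_to_g g_to_f; split=> [[_ fmax] | [_ gmax]].
  split=> // Y' /g_to_f [X' X'P ->]; rewrite -fXgY; exact: fmax.
split=> // X' /f_to_g [Y' Y'P ->]; rewrite fXgY; exact: gmax.
Qed.

Lemma prop14_for_conj : prop14_for conj sq.
Proof.
move=> k N M _ kN NM Phi Psi PhiP PsiP compl.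
have kM : (k <= M)%N by lia.
have NcM : (N + (M - N))%N = M by lia.
have cNM : (M - N + N)%N = M by lia.
apply: maximizes_transfer => //; first exact: Vk_naimark.
  move=> Phi' /(parseval_completion NcM) [Psi' [Psi'P compl']].
  by exists Psi'; last exact: Vk_naimark.
move=> Psi' Psi'P; have [Phi' [Phi'P Phi'E]] := parseval_completion cNM Psi'P.
have compl' : naimark_compl Phi' Psi' by rewrite /naimark_compl Phi'E opprB addrC subrK.
by exists Phi'; last rewrite (Vk_naimark kM Psi'P compl').
Qed.

End Frames.

Lemma prop14_for_real (R : realType) : prop14_for (F := R) id Num.sqrt.
Proof.
apply: prop14_for_conj.
- by [].
- by [].
- by [].
- by move=> x; rewrite -expr2 sqr_ge0.
- by move=> x /eqP; rewrite mulf_eq0 orbb => /eqP.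
- by move=> r /ltW r_ge0; exists (Num.sqrt r); rewrite -expr2 sqr_sqrtr.
Qed.

Lemma prop14_for_complex (R : realType) : prop14_for (F := R[i]) Num.conj sqrtC.
Proof.
apply: prop14_for_conj.
- exact: rmorphD.
- exact: rmorphM.
- exact: conjCK.
- by move=> x; rewrite -normCK exprn_ge0.
- by move=> x /eqP; rewrite -normCK expf_eq0 /= normr_eq0 => /eqP.
- move=> r /ltW r_ge0; exists (sqrtC r).
  by rewrite geC0_conj ?sqrtC_ge0 // -expr2 sqrtCK.
Qed.

Theorem proposition14 (R : realType) :
  prop14_for (F := R) id Num.sqrt /\
  prop14_for (F := R[i]) Num.conj sqrtC.
Proof. by split; [exact: prop14_for_real | exact: prop14_for_complex]. Qed.
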